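(* Let $k$ be an algebraically closed field of characteristic $0$, $G$ a finite group and $V$ any finite-dimensional $G$-module. Then $\mathrm{pol\,ind}(V)=\infty$.
   Context: For $n\in\mathbb N$, $G$ acts diagonally on $V^{\oplus n}$. Polarizations of $f\in k[V]$: $f(\alpha_1v_1+\dots+\alpha_nv_n)=\sum_{(i_1,\dots,i_n)\in\mathbb Z_+^n}\alpha_1^{i_1}\cdots\alpha_n^{i_n}f_{i_1,\dots,i_n}(v_1,\dots,v_n)$; $\mathrm{pol}_nk[V]^G\subseteq k[V^{\oplus n}]^G$ is generated by polarizations of all $f\in k[V]^G$. $\mathcal N_{V^{\oplus n},G}=\{w:F(w)=F(0)\ \forall F\in k[V^{\oplus n}]^G\}$, $\mathcal P_{V^{\oplus n},G}=\{w:h(w)=h(0)\ \forall h\in\mathrm{pol}_nk[V]^G\}$. The polarization index $\mathrm{pol\,ind}(V)$ is the supremum of all $n\in\mathbb N$ with $\mathcal N_{V^{\oplus n},G}=\mathcal P_{V^{\oplus n},G}$. *)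

From HB Require Import structures.
From mathcomp Require Import all_boot all_order all_algebra all_fingroup.
From mathcomp Require Import mxrepresentation.
From mathcomp Require Import mpoly.
Set Implicit Arguments. Unset Strict Implicit. Unset Printing Implicit Defensive.
Import GRing.Theory.
Local Open Scope ring_scope.

Section PolInd.
Variables (k : fieldType) (gT : finGroupType) (G : {group gT}) (d : nat).
Variable rho : mx_representation k G d.

(* V = k^d, realised as row vectors 'rV[k]_d, with (right) action v |-> v *m rho g.
   V^{(+)n} is realised as n x d matrices (row l = v_l); the diagonal action
   is w |-> w *m rho g.  k[V^{(+)n}] = {mpoly k[n*d]}, the variable
   mxvec_index l j being the j-th coordinate of v_l. *)

Definition evalV (f : {mpoly k[d]}) (v : 'rV[k]_d) : k := f.@[fun j => v 0 j].

Definition evalVn (n : nat) (F : {mpoly k[n * d]}) (w : 'M[k]_(n, d)) : k :=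
  F.@[fun i => mxvec w 0 i].

Definition invariantV (f : {mpoly k[d]}) : Prop :=
  forall g, g \in G -> forall v : 'rV[k]_d, evalV f (v *m rho g) = evalV f v.

Definition invariantVn (n : nat) (F : {mpoly k[n * d]}) : Prop :=
  forall g, g \in G -> forall w : 'M[k]_(n, d),
    evalVn F (w *m rho g) = evalVn F w.

(* f(alpha_1 v_1 + ... + alpha_n v_n) as a polynomial in alpha_1..alpha_n whose
   coefficients are polynomials in the coordinates of v_1, ..., v_n. *)
Definition pol_expand (n : nat) (f : {mpoly k[d]}) : {mpoly {mpoly k[n * d]}[n]} :=
  mmap (fun c : k => (c%:MP)%:MP)
       (fun j : 'I_d => \sum_(l < n) 'X_l * ('X_(mxvec_index l j))%:MP) f.

Definition polarization (n : nat) (f : {mpoly k[d]}) (i : 'X_{1..n}) : {mpoly k[n * d]} :=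
  (pol_expand n f)@_i.

Inductive in_pol_alg (n : nat) : {mpoly k[n * d]} -> Prop :=
  | pol_alg_const (c : k) : in_pol_alg (c%:MP)
  | pol_alg_gen (f : {mpoly k[d]}) (i : 'X_{1..n}) :
      invariantV f -> in_pol_alg (polarization f i)
  | pol_alg_add (p q : {mpoly k[n * d]}) : in_pol_alg p -> in_pol_alg q -> in_pol_alg (p + q)
  | pol_alg_mul (p q : {mpoly k[n * d]}) : in_pol_alg p -> in_pol_alg q -> in_pol_alg (p * q).

Definition nullcone (n : nat) (w : 'M[k]_(n, d)) : Prop :=
  forall F : {mpoly k[n * d]}, invariantVn F -> evalVn F w = evalVn F 0.

Definition polcone (n : nat) (w : 'M[k]_(n, d)) : Prop :=
  forall h : {mpoly k[n * d]}, in_pol_alg h -> evalVn h w = evalVn h 0.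

Definition N_eq_P (n : nat) : Prop := forall w : 'M[k]_(n, d), nullcone w <-> polcone w.

(* pol ind(V) = infinity : the set of n with N = P is unbounded
   (its supremum in N u {oo} is oo). *)
Definition pol_ind_infinite : Prop := forall m : nat, exists2 n : nat, (m <= n)%N & N_eq_P n.

End PolInd.

From HB Require Import structures.
From mathcomp Require Import all_boot all_order all_algebra all_fingroup.
From mathcomp Require Import mxrepresentation.
From mathcomp Require Import mpoly.
Set Implicit Arguments. Unset Strict Implicit. Unset Printing Implicit Defensive.
Import GRing.Theory.
Local Open Scope ring_scope.

(* For a finite group both cones are reduced to 0, whatever n.  If v != 0,
   choosing the linear form L(x) = sum_j t^j x_j with t a non-root of the
   nonzero polynomial prod_g (sum_j (v g)_j X^j) makes the orbit product
   prod_g L(x g) an invariant vanishing at 0 but not at v.  Applied to a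
   nonzero row v_l of w in V^n this invariant of V^n separates w from 0, so
   N = {0}.  Evaluating the polarization identity
   f(a_1 v_1 + ... + a_n v_n) = sum_i a^i f_i(v_1, ..., v_n) at a = e_l
   expresses f(v_l) through the polarizations of f, so the same invariant,
   now on V, separates w from 0 through its polarizations: P = {0}. *)

Lemma rmorph_mmap (n : nat) (R S T : nzRingType) (phi : {rmorphism S -> T})
    (f : R -> S) (h : 'I_n -> S) (p : {mpoly R[n]}) :
  phi (mmap f h p) = mmap (phi \o f) (phi \o h) p.
Proof.
rewrite /mmap rmorph_sum; apply: eq_bigr => m _.
rewrite rmorphM /mmap1 rmorph_prod; congr (_ * _); apply: eq_bigr => i _.
by rewrite rmorphXn.
Qed.

Section Polarization.
Variables (k : fieldType) (d n : nat).

Lemma evalV_mulmx_polarization (f : {mpoly k[d]}) (a : 'rV[k]_n) (w : 'M[k]_(n, d)) :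
  evalV f (a *m w) =
  \sum_(i <- msupp (pol_expand n f)) evalVn (polarization f i) w * mmap1 (fun l => a 0 l) i.
Proof.
rewrite -[RHS]/(mmap (meval (fun i => mxvec w 0 i)) (fun l => a 0 l) (pol_expand n f)).
rewrite /pol_expand rmorph_mmap /evalV /meval /mmap; apply: eq_bigr => m _.
congr (_ * _); first by rewrite /= mmapC /= mevalC.
apply: eq_bigr => j _; congr (_ ^+ _).
rewrite /= mxE rmorph_sum; apply: eq_bigr => l _.
by rewrite rmorphM /= mmapX mmap1U mmapC /= mevalXU mxvecE.
Qed.

End Polarization.

Section OrbitProduct.
Variables (k : fieldType) (gT : finGroupType) (G : {group gT}) (d : nat).
Variable rho : mx_representation k G d.

Definition lin_form (c : 'I_d -> k) (u : 'rV[k]_d) : k := \sum_j u 0 j * c j.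

Definition orbit_prod (c : 'I_d -> k) (u : 'rV[k]_d) : k :=
  \prod_(g in G) lin_form c (u *m rho g).

Lemma orbit_prodJ c u h : h \in G -> orbit_prod c (u *m rho h) = orbit_prod c u.
Proof.
move=> hG; rewrite /orbit_prod [RHS](reindex_inj (mulgI h)) /=.
apply: eq_big => g; first by rewrite groupMl.
by move=> gG; rewrite repr_mxM // mulmxA.
Qed.

Lemma orbit_prod0 c : orbit_prod c 0 = 0.
Proof.
rewrite /orbit_prod (bigD1 1%g) //= mul0mx [lin_form _ _]big1 ?mul0r // => j _.
by rewrite mxE mul0r.
Qed.

Definition orbit_prod_mpoly m (X : 'I_d -> {mpoly k[m]}) (c : 'I_d -> k) : {mpoly k[m]} :=
  \prod_(g in G) \sum_j (\sum_i X i * (rho g i j)%:MP) * (c j)%:MP.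

Lemma meval_orbit_prod_mpoly m X c (x : 'I_m -> k) :
  (orbit_prod_mpoly X c).@[x] = orbit_prod c (\row_i (X i).@[x]).
Proof.
rewrite rmorph_prod; apply: eq_bigr => g _.
rewrite rmorph_sum; apply: eq_bigr => j _.
rewrite rmorphM /= mevalC mxE rmorph_sum; congr (_ * _); apply: eq_bigr => i _.
by rewrite rmorphM /= mevalC mxE.
Qed.

Lemma evalV_orbit_prod c v : evalV (orbit_prod_mpoly (fun i => 'X_i) c) v = orbit_prod c v.
Proof.
rewrite /evalV meval_orbit_prod_mpoly; congr orbit_prod.
by apply/rowP => j; rewrite mxE mevalXU.
Qed.

Lemma invariantV_orbit_prod c : invariantV rho (orbit_prod_mpoly (fun i => 'X_i) c).
Proof. by move=> h hG v; rewrite !evalV_orbit_prod orbit_prodJ. Qed.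

Lemma evalVn_orbit_prod_row n (l : 'I_n) c w :
  evalVn (orbit_prod_mpoly (fun i => 'X_(mxvec_index l i)) c) w = orbit_prod c (row l w).
Proof.
rewrite /evalVn meval_orbit_prod_mpoly; congr orbit_prod.
by apply/rowP => j; rewrite !mxE mevalXU mxvecE.
Qed.

Lemma invariantVn_orbit_prod_row n (l : 'I_n) c :
  invariantVn rho (orbit_prod_mpoly (fun i => 'X_(mxvec_index l i)) c).
Proof. by move=> h hG w; rewrite !evalVn_orbit_prod_row row_mul orbit_prodJ. Qed.

End OrbitProduct.

Lemma lin_form_powers (k : fieldType) (d : nat) (t : k) (u : 'rV[k]_d) :
  lin_form (fun j => t ^+ j) u = (rVpoly u).[t].
Proof.
rewrite (horner_coef_wide _ (size_poly _ _)); apply: eq_bigr => j _.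
by rewrite coef_rVpoly_ord.
Qed.

Lemma exists_orbit_prod_neq0 (k : closedFieldType) (gT : finGroupType)
    (G : {group gT}) (d : nat) (rho : mx_representation k G d) (v : 'rV[k]_d) :
  v != 0 -> exists c, orbit_prod rho c v != 0.
Proof.
move=> v_neq0; pose P := \prod_(g in G) rVpoly (v *m rho g).
have /closed_nonrootP[t Pt_neq0] : P != 0.
  apply/prodf_neq0 => g gG; apply: contraNneq v_neq0 => vg0.
  have rho_free : row_free (rho g) by rewrite row_free_unit repr_mx_unit.
  by rewrite -(mulmx_free_eq0 _ rho_free) -[_ *m _]rVpolyK vg0 linear0.
exists (fun j => t ^+ j); move: Pt_neq0; rewrite /root /P horner_prod.
by under eq_bigr do rewrite -lin_form_powers.
Qed.

Lemma exists_row_neq0 (R : nmodType) (m n : nat) (w : 'M[R]_(m, n)) :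
  w != 0 -> exists l, row l w != 0.
Proof.
move=> w_neq0; apply/existsP; apply: contraNT w_neq0 => /existsPn w0.
by apply/eqP/row_matrixP => l; rewrite row0; apply/eqP/negPn/w0.
Qed.

Section Cones.
Variables (k : closedFieldType) (gT : finGroupType) (G : {group gT}) (d n : nat).
Variable rho : mx_representation k G d.

Lemma nullcone_eq0 (w : 'M[k]_(n, d)) : nullcone rho w -> w = 0.
Proof.
move=> Nw; apply/eqP; apply: contraT => w_neq0.
have [l wl_neq0] := exists_row_neq0 w_neq0.
have [c /negP wl_sep] := exists_orbit_prod_neq0 rho wl_neq0.
have := Nw _ (invariantVn_orbit_prod_row rho l c).
by rewrite !evalVn_orbit_prod_row row0 orbit_prod0 => /eqP.
Qed.

Lemma polcone_eq0 (w : 'M[k]_(n, d)) : polcone rho w -> w = 0.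
Proof.
move=> Pw; apply/eqP; apply: contraT => w_neq0.
have [l wl_neq0] := exists_row_neq0 w_neq0.
have [c /negP wl_sep] := exists_orbit_prod_neq0 rho wl_neq0.
pose f := orbit_prod_mpoly rho (fun i => 'X_i) c.
have : evalV f (row l w) = evalV f (row l 0).
  rewrite (rowE l w) (rowE l 0) !evalV_mulmx_polarization.
  apply: eq_bigr => i _; congr (_ * _).
  by apply: Pw; apply: pol_alg_gen; apply: invariantV_orbit_prod.
by rewrite row0 !evalV_orbit_prod orbit_prod0 => /eqP.
Qed.

Lemma N_eq_P_finite : N_eq_P rho n.
Proof.
move=> w; split=> [/nullcone_eq0 -> | /polcone_eq0 ->].
  by move=> h _.
by move=> F _.
Qed.

End Cones.

Theorem theorem3p9 (k : closedFieldType) (hchar : [pchar k]%R =i pred0)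
  (gT : finGroupType) (G : {group gT}) (d : nat) (rho : mx_representation k G d) :
  pol_ind_infinite rho.
Proof. by move=> m; exists m => //; apply: N_eq_P_finite. Qed.
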